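(* Let $\beta\in(0,1)$. With the medium-expectation rounding defined in the context, suppose $|\mathcal{M}_1^*(k)|\le k^\beta$. If $X_i$ ($i\in\mathcal{M}_1^*(k)$) are independent indicators with $\mathbb{E}[X_i]=p_i$ and $Y_i$ ($i\in\mathcal{M}_1^*(k)$) are independent indicators with $\mathbb{E}[Y_i]=q_i$, then $$\left\|\sum_{i\in\mathcal{M}_1^*(k)}X_i-\sum_{i\in\mathcal{M}_1^*(k)}Y_i\right\|\le\frac{1}{k^{1-\beta}}.$$
   Context: $\|\cdot\|$ is total variation distance. Let $k$ be a positive integer, $\alpha\in(0,1)$, and $p_1,\dots,p_n\in[0,1]$. For $j=0,1,\dots,\lfloor k/2\rfloor$ let $I_j=[j/k,(j+1)/k)$ if $j<\lfloor k/2\rfloor$ and $I_{\lfloor k/2\rfloor}=[\lfloor k/2\rfloor/k,1/2]$; let $I^*_j=\{i:p_i\in I_j\}=\{j_1,\dots,j_{n_j}\}$ (listed in some fixed order, $n_j=|I^*_j|$), $p^j_i:=p_{j_i}$ and $\delta^j_i:=p^j_i-j/k$. Let $\mathcal{M}_1^*(k)=\bigcup_{j=\lfloor k^\alpha\rfloor}^{\lfloor k/2\rfloor}I^*_j$. Medium-expectation rounding: for $j=\lfloor k^\alpha\rfloor,\dots,\lfloor k/2\rfloor$ let $S_j=\sum_{i=1}^{n_j}\delta^j_i$, $m_j=\lfloor kS_j\rfloor$, and set $q_{j_i}=(j+1)/k$ for $i=1,\dots,m_j$ and $q_{j_i}=j/k$ for $i=m_j+1,\dots,n_j$. *)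

From Stdlib Require Import Reals Lra Lia ZArith Arith List.
Open Scope R_scope.

Definition inI (k j : nat) (x : R) : Prop :=
  if (j <? Nat.div k 2)%nat
  then INR j / INR k <= x < INR (j + 1) / INR k
  else INR j / INR k <= x <= 1 / 2.

Definition jlo (k : nat) (alpha : R) : nat :=
  Z.to_nat (Int_part (Rpower (INR k) alpha)).

(* i in M_1^*(k) (indices are 0..n-1) *)
Definition inM (n k : nat) (alpha : R) (p : nat -> R) (i : nat) : Prop :=
  (i < n)%nat /\
  exists j : nat, (jlo k alpha <= j <= Nat.div k 2)%nat /\ inI k j (p i).

(* l is an enumeration (some fixed order, no repetition) of I^*_j *)
Definition is_class (n k : nat) (p : nat -> R) (j : nat) (l : list nat) : Prop :=
  NoDup l /\ forall i, In i l <-> ((i < n)%nat /\ inI k j (p i)).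

Definition Sj (k j : nat) (p : nat -> R) (l : list nat) : R :=
  fold_right (fun i acc => (p i - INR j / INR k) + acc) 0 l.

Definition mj (k j : nat) (p : nat -> R) (l : list nat) : Z :=
  Int_part (INR k * Sj k j p l).

(* q is the medium-expectation rounding of p w.r.t. the enumerations ord j:
   the (t+1)-th listed element j_{t+1} gets (j+1)/k if t+1 <= m_j, else j/k. *)
Definition medium_rounding (k : nat) (alpha : R) (p : nat -> R)
  (ord : nat -> list nat) (q : nat -> R) : Prop :=
  forall j, (jlo k alpha <= j <= Nat.div k 2)%nat ->
  forall t, (t < length (ord j))%nat ->
    q (nth t (ord j) 0%nat) =
      if Z.ltb (Z.of_nat t) (mj k j p (ord j))
      then INR (j + 1) / INR k else INR j / INR k.

(* Law of a sum of independent indicators with means ps (Poisson binomial):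
   pb ps x = P(sum = x). *)
Fixpoint pb (ps : list R) (x : nat) : R :=
  match ps with
  | nil => if (x =? 0)%nat then 1 else 0
  | p :: ps' =>
      match x with
      | O => (1 - p) * pb ps' O
      | S x' => p * pb ps' x' + (1 - p) * pb ps' (S x')
      end
  end.

(* total variation distance between the laws of the two sums
   (both supported on {0,...,max(length ps, length qs)}) *)
Definition tv_sum (ps qs : list R) : R :=
  / 2 * sum_f_R0 (fun x => Rabs (pb ps x - pb qs x))
                 (Nat.max (length ps) (length qs)).

From Stdlib Require Import Reals Lra Lia ZArith Arith List.
Open Scope R_scope.

(* The distance between two sums of independent indicators is at
   most the sum of the distances between their means: adding one more
   indicator with mean a (resp. b) to two laws A and B produces the laws
   a*shift A + (1-a)*A and b*shift B + (1-b)*B, whose l1 distance is at most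
   that of A and B plus 2|a-b| (since B has mass one).  By induction,
       tv(sum X_i, sum Y_i) <= sum_i |p_i - q_i|.
   For i in M_1^*(k), p_i lies in the cell [j/k, (j+1)/k] of its class j and
   the medium-expectation rounding moves it to one of the two endpoints of
   that cell, so |p_i - q_i| <= 1/k.  With |M_1^*(k)| <= k^beta this gives
   the bound k^beta / k = 1 / k^(1-beta). *)

Lemma sum_scal_l (c : R) (f : nat -> R) (N : nat) :
  sum_f_R0 (fun x => c * f x) N = c * sum_f_R0 f N.
Proof.
  rewrite scal_sum. apply sum_eq. intros; ring.
Qed.

(* Shift of a law on nat by one: if f is the law of Z, shift f is the law of 1 + Z. *)
Definition shift (f : nat -> R) (x : nat) : R :=
  match x with O => 0 | S x' => f x' end.

Lemma sum_shift (f : nat -> R) (N : nat) :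
  sum_f_R0 (shift f) (S N) = sum_f_R0 f N.
Proof. induction N as [|N IH]; simpl in *; [|rewrite IH]; ring. Qed.

Lemma pb_cons (a : R) (ps : list R) (x : nat) :
  pb (a :: ps) x = a * shift (pb ps) x + (1 - a) * pb ps x.
Proof. destruct x; simpl; ring. Qed.

Lemma pb_nonneg (ps : list R) (x : nat) :
  Forall (fun r => 0 <= r <= 1) ps -> 0 <= pb ps x.
Proof.
  revert x; induction ps as [|a ps IH]; intros x Hps.
  - simpl; destruct (x =? 0)%nat; lra.
  - inversion Hps as [|? ? Ha Hps']; subst.
    destruct x; simpl.
    + pose proof (IH 0%nat Hps'); nra.
    + pose proof (IH x Hps'); pose proof (IH (S x) Hps'); nra.
Qed.

Lemma shift_pb_nonneg (ps : list R) (x : nat) :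
  Forall (fun r => 0 <= r <= 1) ps -> 0 <= shift (pb ps) x.
Proof. destruct x; simpl; [lra|apply pb_nonneg]. Qed.

Lemma pb_vanishes (ps : list R) (x : nat) : (length ps < x)%nat -> pb ps x = 0.
Proof.
  revert x; induction ps as [|a ps IH]; intros x Hx; simpl in *.
  - destruct x; [lia|reflexivity].
  - destruct x; [lia|]. rewrite !IH by lia. ring.
Qed.

Lemma pb_mass (ps : list R) (N : nat) :
  (length ps <= N)%nat -> sum_f_R0 (pb ps) N = 1.
Proof.
  revert N; induction ps as [|a ps IH]; intros N HN.
  - clear HN. induction N as [|N IHN]; simpl in *; [|rewrite IHN]; ring.
  - simpl in HN. destruct N as [|M]; [lia|].
    rewrite (sum_eq _ (fun x => a * shift (pb ps) x + (1 - a) * pb ps x))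
      by (intros; apply pb_cons).
    rewrite sum_plus, !sum_scal_l, sum_shift.
    simpl sum_f_R0 at 2. rewrite IH, pb_vanishes by lia. ring.
Qed.

Lemma mixture_deviation (a b A A' B B' : R) :
  0 <= a <= 1 -> 0 <= B -> 0 <= B' ->
  Rabs (a * A' + (1 - a) * A - (b * B' + (1 - b) * B)) <=
  a * Rabs (A' - B') + (1 - a) * Rabs (A - B) + Rabs (a - b) * (B' + B).
Proof.
  intros Ha HB HB'.
  replace (a * A' + (1 - a) * A - (b * B' + (1 - b) * B)) with
    (a * (A' - B') + (1 - a) * (A - B) + (a - b) * (B' - B)) by ring.
  eapply Rle_trans; [apply Rabs_triang|].
  eapply Rle_trans; [apply Rplus_le_compat_r, Rabs_triang|].
  rewrite !Rabs_mult, (Rabs_pos_eq a), (Rabs_pos_eq (1 - a)) by lra.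
  apply Rplus_le_compat_l, Rmult_le_compat_l; [apply Rabs_pos|].
  unfold Rabs; destruct Rcase_abs; lra.
Qed.

Definition mean_distance (p q : nat -> R) (L : list nat) : R :=
  fold_right (fun i acc => Rabs (p i - q i) + acc) 0 L.

Lemma pb_l1_distance (p q : nat -> R) (L : list nat) (N : nat) :
  (forall i, In i L -> 0 <= p i <= 1 /\ 0 <= q i <= 1) ->
  (length L <= N)%nat ->
  sum_f_R0 (fun x => Rabs (pb (map p L) x - pb (map q L) x)) N
    <= 2 * mean_distance p q L.
Proof.
  revert N; induction L as [|i L IH]; intros N Hpq HN.
  - simpl. rewrite (sum_eq _ (fun _ => 0)) by (intros; rewrite Rminus_diag, Rabs_R0; reflexivity).
    rewrite sum_cte. lra.
  - simpl in HN. destruct N as [|M]; [lia|].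
    assert (HpqL : forall i', In i' L -> 0 <= p i' <= 1 /\ 0 <= q i' <= 1)
      by (intros; apply Hpq; right; assumption).
    assert (Hq : Forall (fun r => 0 <= r <= 1) (map q L)).
    { apply Forall_forall. intros r Hr. apply in_map_iff in Hr.
      destruct Hr as [y [<- Hy]]. apply HpqL; assumption. }
    destruct (Hpq i (or_introl eq_refl)) as [Hpi _].
    set (A := pb (map p L)). set (B := pb (map q L)).
    set (d := fun x => Rabs (A x - B x)).
    assert (Hshift_d : forall x, shift d x = Rabs (shift A x - shift B x))
      by (intros [|x]; simpl; [rewrite Rminus_diag, Rabs_R0|]; reflexivity).
    assert (HdM : d (S M) = 0)
      by (unfold d, A, B; rewrite !pb_vanishes by (rewrite length_map; lia);
          rewrite Rminus_diag, Rabs_R0; reflexivity).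
    assert (HBM : B (S M) = 0) by (apply pb_vanishes; rewrite length_map; lia).
    assert (HBmass : sum_f_R0 B M = 1) by (apply pb_mass; rewrite length_map; lia).
    assert (IHM := IH M HpqL ltac:(lia)). fold A B d in IHM.
    apply Rle_trans with (sum_f_R0 (fun x => p i * shift d x + (1 - p i) * d x
                     + Rabs (p i - q i) * (shift B x + B x)) (S M)).
    + apply sum_Rle. intros x _. simpl map. rewrite !pb_cons, Hshift_d.
      apply mixture_deviation; [assumption|apply pb_nonneg|apply shift_pb_nonneg];
        assumption.
    + rewrite !sum_plus, !sum_scal_l, !sum_plus, !sum_shift.
      simpl sum_f_R0 at 2 4. rewrite HdM, HBM, HBmass.
      simpl mean_distance. lra.
Qed.

Lemma tv_sum_le_mean_distance (p q : nat -> R) (L : list nat) :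
  (forall i, In i L -> 0 <= p i <= 1 /\ 0 <= q i <= 1) ->
  tv_sum (map p L) (map q L) <= mean_distance p q L.
Proof.
  intros Hpq. unfold tv_sum. rewrite !length_map, Nat.max_id.
  pose proof (pb_l1_distance p q L (length L) Hpq (le_n _)). lra.
Qed.

Lemma mean_distance_le (p q : nat -> R) (L : list nat) (e : R) :
  (forall i, In i L -> Rabs (p i - q i) <= e) ->
  mean_distance p q L <= INR (length L) * e.
Proof.
  induction L as [|i L IH]; intros He; simpl mean_distance; [simpl; lra|].
  rewrite length_cons, S_INR.
  pose proof (He i (or_introl eq_refl)).
  assert (mean_distance p q L <= INR (length L) * e)
    by (apply IH; intros; apply He; right; assumption).
  lra.
Qed.

(* Every class I_j with j <= floor(k/2) is contained in the cell
   [j/k, (j+1)/k]; the last class [j/k, 1/2] fits since 1/2 <= (j+1)/k. *)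
Lemma inI_cell (k j : nat) (x : R) :
  (1 <= k)%nat -> (j <= Nat.div k 2)%nat -> inI k j x ->
  INR j / INR k <= x <= INR (j + 1) / INR k.
Proof.
  intros Hk Hj HI. assert (Hk0 : 0 < INR k) by (apply lt_0_INR; lia).
  unfold inI in HI. destruct (j <? Nat.div k 2)%nat eqn:E; [lra|].
  apply Nat.ltb_ge in E.
  assert (Hk2 : (k <= 2 * (j + 1))%nat).
  { pose proof (Nat.div_mod k 2 ltac:(lia)).
    pose proof (Nat.mod_upper_bound k 2 ltac:(lia)). lia. }
  apply le_INR in Hk2. rewrite mult_INR in Hk2. simpl (INR 2) in Hk2.
  assert (1 / 2 <= INR (j + 1) / INR k).
  { apply (Rmult_le_reg_r (INR k)); [lra|].
    replace (INR (j + 1) / INR k * INR k) with (INR (j + 1)) by (field; lra).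
    lra. }
  lra.
Qed.

Lemma medium_rounding_endpoint (n k : nat) (alpha : R) (p q : nat -> R)
  (ord : nat -> list nat) (j i : nat) :
  medium_rounding k alpha p ord q ->
  (jlo k alpha <= j <= Nat.div k 2)%nat -> is_class n k p j (ord j) ->
  (i < n)%nat -> inI k j (p i) ->
  q i = INR j / INR k \/ q i = INR (j + 1) / INR k.
Proof.
  intros Hmr Hj [_ Hclass] Hi HI.
  destruct (In_nth (ord j) i 0%nat (proj2 (Hclass i) (conj Hi HI)))
    as [t [Ht <-]].
  rewrite (Hmr j Hj t Ht).
  destruct (Z.ltb (Z.of_nat t) (mj k j p (ord j))); auto.
Qed.

(* A point of the cell [A, B] and an endpoint of it are at distance at most
   B - A; the cell has width 1/k and lies in [0, 1]. *)
Lemma rounding_error (n k : nat) (alpha : R) (p q : nat -> R)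
  (ord : nat -> list nat) (i : nat) :
  (1 <= k)%nat ->
  (forall j, (jlo k alpha <= j <= Nat.div k 2)%nat -> is_class n k p j (ord j)) ->
  medium_rounding k alpha p ord q -> inM n k alpha p i ->
  0 <= q i <= 1 /\ Rabs (p i - q i) <= / INR k.
Proof.
  intros Hk Hcl Hmr [Hi [j [Hj HI]]].
  assert (Hk0 : 0 < INR k) by (apply lt_0_INR; lia).
  pose proof (inI_cell k j (p i) Hk (proj2 Hj) HI) as Hcell.
  pose proof (medium_rounding_endpoint n k alpha p q ord j i Hmr Hj (Hcl j Hj) Hi HI)
    as Hend.
  assert (Hj1 : (j + 1 <= k)%nat).
  { pose proof (Nat.div_mod k 2 ltac:(lia)). lia. }
  apply le_INR in Hj1. rewrite plus_INR in *. simpl INR in *.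
  assert (Hlo : 0 <= INR j / INR k)
    by (apply Rmult_le_pos; [apply pos_INR|left; apply Rinv_0_lt_compat, Hk0]).
  assert (Hhi : (INR j + 1) / INR k <= 1)
    by (apply (Rmult_le_reg_r (INR k)); [lra|];
        replace ((INR j + 1) / INR k * INR k) with (INR j + 1) by (field; lra);
        lra).
  assert (Hwidth : (INR j + 1) / INR k - INR j / INR k = / INR k) by (field; lra).
  split; [destruct Hend as [-> | ->]; lra|].
  apply Rabs_le. destruct Hend as [-> | ->]; lra.
Qed.

Lemma size_over_k_bound (m k : nat) (beta : R) :
  (1 <= k)%nat -> INR m <= Rpower (INR k) beta ->
  INR m * / INR k <= 1 / Rpower (INR k) (1 - beta).
Proof.
  intros Hk Hm. assert (Hk0 : 0 < INR k) by (apply lt_0_INR; lia).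
  assert (Hkb : 0 < Rpower (INR k) beta) by apply exp_pos.
  replace (1 - beta) with (1 + - beta) by ring.
  rewrite Rpower_plus, Rpower_Ropp, Rpower_1 by lra.
  replace (1 / (INR k * / Rpower (INR k) beta)) with (Rpower (INR k) beta * / INR k)
    by (field; lra).
  apply Rmult_le_compat_r; [left; apply Rinv_0_lt_compat|]; lra.
Qed.

Theorem mainTheorem12 (alpha beta : R) (k n : nat) (p : nat -> R)
  (ord : nat -> list nat) (q : nat -> R) (L : list nat) :
  0 < alpha < 1 -> 0 < beta < 1 -> (1 <= k)%nat ->
  (forall i, (i < n)%nat -> 0 <= p i <= 1) ->
  (forall j, (jlo k alpha <= j <= Nat.div k 2)%nat -> is_class n k p j (ord j)) ->
  medium_rounding k alpha p ord q ->
  NoDup L -> (forall i, In i L <-> inM n k alpha p i) ->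
  INR (length L) <= Rpower (INR k) beta ->
  tv_sum (map p L) (map q L) <= 1 / Rpower (INR k) (1 - beta).
Proof.
  intros _ _ Hk Hp Hcl Hmr _ HL Hsize.
  assert (Hround : forall i, In i L ->
            0 <= q i <= 1 /\ Rabs (p i - q i) <= / INR k)
    by (intros i Hi; apply (rounding_error n k alpha p q ord); auto; apply HL, Hi).
  assert (Hmeans : forall i, In i L -> 0 <= p i <= 1 /\ 0 <= q i <= 1).
  { intros i Hi. split; [apply Hp, (proj1 (proj1 (HL i) Hi))|apply Hround, Hi]. }
  eapply Rle_trans; [apply tv_sum_le_mean_distance, Hmeans|].
  eapply Rle_trans; [apply mean_distance_le; intros i Hi; apply Hround, Hi|].
  apply size_over_k_bound; assumption.
Qed.
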